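(* Let $Z=\ell_2$ with canonical basis $(e_n)$ and coordinate functionals $(e_n^* )$, let $\theta:\mathbb{R}\to[0,\infty)$ be $\theta(t)=0$ for $t\le0$, $\theta(t)=t^2$ for $t\ge0$, and define $f:Z\to[0,\infty)$ by $$f(x)=\sum_{n=1}^\infty 2^{-n}\,\theta\big(e_n^*(x)-n\big).$$ Then $f$ is continuous and convex and is not constant on any line $\{x+tv:t\in\mathbb{R}\}$ with $v\neq0$, but there is no continuous linear form $\xi:Z\to\mathbb{R}$ such that $f-\xi$ attains a strict minimum, i.e. there are no $\xi\in Z^*$ and $x\in Z$ with $(f-\xi)(y)>(f-\xi)(x)$ for all $y\neq x$. *)

(* classical reals. Z = l2 modelled as square-summable sequences nat -> R;
   index n : nat corresponds to the coordinate e_{n+1} of the paper. *)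
From Stdlib Require Import Reals ClassicalEpsilon.
Open Scope R_scope.

Definition rseq := nat -> R.

(* the sum of a series (meaningful when the series converges) *)
Definition series (a : rseq) : R :=
  epsilon (inhabits 0) (fun l => infinite_sum a l).

Definition is_l2 (x : rseq) : Prop :=
  exists l, infinite_sum (fun n => (x n) ^ 2) l.

Definition l2norm (x : rseq) : R := sqrt (series (fun n => (x n) ^ 2)).

Definition sadd (x y : rseq) : rseq := fun n => x n + y n.
Definition ssub (x y : rseq) : rseq := fun n => x n - y n.
Definition sscal (a : R) (x : rseq) : rseq := fun n => a * x n.

Definition l2_continuous (g : rseq -> R) : Prop :=
  forall x, is_l2 x -> forall eps, 0 < eps -> exists delta, 0 < delta /\
    forall y, is_l2 y -> l2norm (ssub y x) < delta -> Rabs (g y - g x) < eps.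

Definition l2_linear (g : rseq -> R) : Prop :=
  forall x y a b, is_l2 x -> is_l2 y ->
    g (sadd (sscal a x) (sscal b y)) = a * g x + b * g y.

Definition l2_dual (xi : rseq -> R) : Prop := l2_linear xi /\ l2_continuous xi.

Definition l2_convex (g : rseq -> R) : Prop :=
  forall x y t, is_l2 x -> is_l2 y -> 0 <= t <= 1 ->
    g (sadd (sscal t x) (sscal (1 - t) y)) <= t * g x + (1 - t) * g y.

Definition theta (t : R) : R := if Rle_dec t 0 then 0 else t ^ 2.

Definition f_ex (x : rseq) : R :=
  series (fun n => (/ 2) ^ (S n) * theta (x n - INR (S n))).

From Stdlib Require Import Reals Lra Lia Psatz Classical ClassicalEpsilon FunctionalExtensionality.
From Coquelicot Require Import Coquelicot.
Open Scope R_scope.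

(* Every point of l2 is a bounded sequence, and on a set of sequences bounded
   above by K the n-th term of f vanishes as soon as n + 1 > K.  So on such a set
   f is a finite sum of the convex functions 2^-(n+1) theta(x_n - n - 1); since
   theta is 2K-Lipschitz on (-oo, K] and the weights sum to at most 1, f is
   2K-Lipschitz there for the sup norm, hence continuous on l2.  Along a line x + tv with v_k <> 0 the k-th term
   tends to infinity, so f is not constant there.  Finally, at any x a
   perturbation of size at most 1 of a coordinate n >= |x|_oo does not change f, so
   f - xi cannot have a strict minimum at x: it would force both xi(e_n) < 0 and
   xi(e_n) > 0. *)

Lemma infinite_sum_finite (a : rseq) (N : nat) :
  (forall n, (N < n)%nat -> a n = 0) -> infinite_sum a (sum_f_R0 a N).
Proof.
  intros Ha eps Heps. exists N. intros n Hn.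
  assert (Hsum : sum_f_R0 a n = sum_f_R0 a N).
  { induction Hn as [|n Hn IH]; [reflexivity|]. simpl. rewrite IH, Ha by lia. ring. }
  unfold R_dist. rewrite Hsum, Rminus_diag, Rabs_R0. exact Heps.
Qed.

Lemma series_eq (a : rseq) (l : R) : infinite_sum a l -> series a = l.
Proof.
  intros Hl. apply (uniqueness_sum a); [|exact Hl].
  apply (epsilon_spec (inhabits 0) (fun l => infinite_sum a l)). now exists l.
Qed.

Lemma le_sum_f_R0 (a : rseq) (k : nat) : (forall n, 0 <= a n) -> a k <= sum_f_R0 a k.
Proof.
  intros Ha. destruct k as [|k]; simpl; [lra|].
  pose proof (cond_pos_sum a k Ha). lra.
Qed.

Lemma sum_le_lincomb (a b c : rseq) (s t : R) (N : nat) :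
  (forall n, a n <= s * b n + t * c n) ->
  sum_f_R0 a N <= s * sum_f_R0 b N + t * sum_f_R0 c N.
Proof. intros Habc. induction N; simpl; [apply Habc|]. pose proof (Habc (S N)). lra. Qed.

Lemma sum_half_pow (N : nat) : sum_f_R0 (fun n => (/ 2) ^ S n) N = 1 - (/ 2) ^ S N.
Proof. induction N as [|N IH]; simpl in *; [field|rewrite IH; field]. Qed.

Lemma exists_nat_ge (K : R) : exists N : nat, K <= INR N.
Proof. destruct (INR_archimed 1 K) as [N HN]; [lra|]. exists N. lra. Qed.

Lemma is_l2_lincomb (a b : R) (x y z : rseq) :
  (forall n, z n = a * x n + b * y n) -> is_l2 x -> is_l2 y -> is_l2 z.
Proof.
  intros Hz [lx Hx] [ly Hy].
  assert (Hsum : ex_series (fun n => z n ^ 2)).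
  { apply (@ex_series_le R_AbsRing R_CompleteNormedModule)
      with (fun n => 2 * a ^ 2 * x n ^ 2 + 2 * b ^ 2 * y n ^ 2).
    - intros n. change (norm (z n ^ 2)) with (Rabs (z n ^ 2)).
      rewrite Hz, Rabs_pos_eq by apply pow2_ge_0.
      pose proof (pow2_ge_0 (a * x n - b * y n)). simpl in *. nra.
    - apply (ex_series_plus (fun n => scal (2 * a ^ 2) (x n ^ 2))
                            (fun n => scal (2 * b ^ 2) (y n ^ 2))).
      + apply (@ex_series_scal R_AbsRing R_NormedModule).
        exists lx. now apply is_series_Reals.
      + apply (@ex_series_scal R_AbsRing R_NormedModule).
        exists ly. now apply is_series_Reals. }
  destruct Hsum as [l Hl]. exists l. now apply is_series_Reals.
Qed.

Lemma l2_coord_le (z : rseq) (n : nat) : is_l2 z -> Rabs (z n) <= l2norm z.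
Proof.
  intros [l Hl]. unfold l2norm. rewrite (series_eq _ _ Hl).
  assert (Hzn : z n ^ 2 <= l).
  { apply Rle_trans with (sum_f_R0 (fun n => z n ^ 2) n).
    - apply (le_sum_f_R0 (fun n => z n ^ 2)). intros; apply pow2_ge_0.
    - apply sum_incr; [exact Hl|]. intros; apply pow2_ge_0. }
  rewrite <- sqrt_Rsqr_abs. apply sqrt_le_1_alt. unfold Rsqr. simpl in Hzn. lra.
Qed.

Lemma l2_coord_ub (z : rseq) (n : nat) : is_l2 z -> z n <= l2norm z.
Proof. intros Hz. pose proof (Rle_abs (z n)). pose proof (l2_coord_le z n Hz). lra. Qed.

Lemma theta_Rmax (s : R) : theta s = Rmax s 0 ^ 2.
Proof. unfold theta, Rmax. destruct (Rle_dec s 0), (Rle_dec s 0); simpl; lra. Qed.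

Lemma theta_ge0 (s : R) : 0 <= theta s.
Proof. rewrite theta_Rmax. apply pow2_ge_0. Qed.

Lemma theta_eq0 (s : R) : s <= 0 -> theta s = 0.
Proof. intros Hs. unfold theta. destruct (Rle_dec s 0); [reflexivity|lra]. Qed.

Lemma theta_convex (a b t : R) : 0 <= t <= 1 ->
  theta (t * a + (1 - t) * b) <= t * theta a + (1 - t) * theta b.
Proof.
  intros Ht. rewrite !theta_Rmax.
  set (p := Rmax a 0). set (q := Rmax b 0).
  assert (Hp : a <= p /\ 0 <= p) by (split; [apply Rmax_l|apply Rmax_r]).
  assert (Hq : b <= q /\ 0 <= q) by (split; [apply Rmax_l|apply Rmax_r]).
  assert (Hmax : 0 <= Rmax (t * a + (1 - t) * b) 0 <= t * p + (1 - t) * q).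
  { split; [apply Rmax_r|]. apply Rmax_lub; nra. }
  set (r := Rmax (t * a + (1 - t) * b) 0) in *.
  assert (Hr : r ^ 2 <= (t * p + (1 - t) * q) ^ 2) by (apply pow_incr; exact Hmax).
  assert (Hpq : 0 <= t * (1 - t) * (p - q) ^ 2)
    by (apply Rmult_le_pos; [nra|apply pow2_ge_0]).
  replace (t * p ^ 2 + (1 - t) * q ^ 2) with
    ((t * p + (1 - t) * q) ^ 2 + t * (1 - t) * (p - q) ^ 2) by ring.
  lra.
Qed.

Lemma theta_lipschitz (K a b : R) : a <= K -> b <= K ->
  Rabs (theta a - theta b) <= 2 * Rmax K 0 * Rabs (a - b).
Proof.
  intros Ha Hb. rewrite !theta_Rmax.
  assert (Hab : Rabs (Rmax a 0 - Rmax b 0) <= Rabs (a - b)).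
  { unfold Rmax, Rabs.
    destruct (Rle_dec a 0), (Rle_dec b 0); repeat destruct Rcase_abs; lra. }
  assert (Hsum : Rabs (Rmax a 0 + Rmax b 0) <= 2 * Rmax K 0).
  { unfold Rmax, Rabs.
    destruct (Rle_dec a 0), (Rle_dec b 0), (Rle_dec K 0); repeat destruct Rcase_abs; lra. }
  replace (Rmax a 0 ^ 2 - Rmax b 0 ^ 2) with
    ((Rmax a 0 + Rmax b 0) * (Rmax a 0 - Rmax b 0)) by ring.
  rewrite Rabs_mult. apply Rmult_le_compat; try apply Rabs_pos; assumption.
Qed.

Definition f_term (z : rseq) (n : nat) : R := (/ 2) ^ S n * theta (z n - INR (S n)).

Lemma f_ex_series (z : rseq) : f_ex z = series (f_term z).
Proof. reflexivity. Qed.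

Lemma f_term_ge0 (z : rseq) (n : nat) : 0 <= f_term z n.
Proof. apply Rmult_le_pos; [apply pow_le; lra|apply theta_ge0]. Qed.

Section BoundedAbove.

Variables (z : rseq) (K : R).
Hypothesis z_ub : forall n, z n <= K.

Lemma f_term_eq0 (N n : nat) : K <= INR N -> (N < n)%nat -> f_term z n = 0.
Proof.
  intros HN Hn. unfold f_term. rewrite theta_eq0; [ring|].
  assert (INR N < INR (S n)) by (apply lt_INR; lia).
  pose proof (z_ub n). lra.
Qed.

Lemma f_ex_trunc (N : nat) : K <= INR N -> f_ex z = sum_f_R0 (f_term z) N.
Proof.
  intros HN. apply series_eq, infinite_sum_finite. intros n Hn. exact (f_term_eq0 N n HN Hn).
Qed.

Lemma f_term_le_f_ex (k : nat) : f_term z k <= f_ex z.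
Proof.
  destruct (exists_nat_ge K) as [N HN].
  apply Rle_trans with (sum_f_R0 (f_term z) k); [apply le_sum_f_R0, f_term_ge0|].
  apply sum_incr; [|apply f_term_ge0].
  rewrite (f_ex_trunc N HN). apply infinite_sum_finite.
  intros n Hn. exact (f_term_eq0 N n HN Hn).
Qed.

End BoundedAbove.

Lemma f_ex_lipschitz (y z : rseq) (K d : R) :
  (forall n, y n <= K) -> (forall n, z n <= K) -> (forall n, Rabs (y n - z n) <= d) ->
  Rabs (f_ex y - f_ex z) <= 2 * Rmax K 0 * d.
Proof.
  intros Hy Hz Hd. destruct (exists_nat_ge K) as [N HN].
  rewrite (f_ex_trunc y K Hy N HN), (f_ex_trunc z K Hz N HN), <- minus_sum.
  eapply Rle_trans; [apply Rsum_abs|].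
  apply Rle_trans with (sum_f_R0 (fun n => (/ 2) ^ S n * (2 * Rmax K 0 * d)) N).
  - apply sum_growing. intros n. unfold f_term.
    rewrite <- Rmult_minus_distr_l, Rabs_mult, Rabs_pos_eq by (apply pow_le; lra).
    apply Rmult_le_compat_l; [apply pow_le; lra|].
    eapply Rle_trans; [apply (theta_lipschitz K); [|]|].
    + pose proof (Hy n). pose proof (pos_INR (S n)). lra.
    + pose proof (Hz n). pose proof (pos_INR (S n)). lra.
    + replace (y n - INR (S n) - (z n - INR (S n))) with (y n - z n) by ring.
      apply Rmult_le_compat_l; [pose proof (Rmax_r K 0); lra|apply Hd].
  - rewrite <- scal_sum, sum_half_pow.
    assert (0 <= 2 * Rmax K 0 * d).
    { pose proof (Rmax_r K 0). pose proof (Hd 0%nat). pose proof (Rabs_pos (y 0%nat - z 0%nat)). nra. }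
    pose proof (pow_le (/ 2) (S N)). nra.
Qed.

Lemma f_ex_continuous : l2_continuous f_ex.
Proof.
  intros x Hx eps Heps.
  set (M := l2norm x + 1).
  assert (HM : 1 <= M) by (pose proof (sqrt_pos (series (fun n => x n ^ 2))); unfold M, l2norm; lra).
  exists (Rmin 1 (eps / (2 * M))). split.
  { apply Rmin_glb_lt; [lra|]. apply Rdiv_lt_0_compat; lra. }
  intros y Hy Hyx. set (d := l2norm (ssub y x)) in Hyx.
  assert (Hd : forall n, Rabs (y n - x n) <= d).
  { intros n. apply (l2_coord_le (ssub y x) n).
    apply (is_l2_lincomb 1 (-1) y x); [intros; unfold ssub; ring|exact Hy|exact Hx]. }
  assert (Hd1 : d < 1) by (eapply Rlt_le_trans; [exact Hyx|apply Rmin_l]).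
  assert (Hdeps : 2 * M * d < eps).
  { apply Rmult_lt_reg_r with (/ (2 * M)); [apply Rinv_0_lt_compat; lra|].
    replace (2 * M * d * / (2 * M)) with d by (field; lra).
    eapply Rlt_le_trans; [exact Hyx|apply Rmin_r]. }
  assert (Hx_ub : forall n, x n <= M) by (intros n; pose proof (l2_coord_ub x n Hx); unfold M; lra).
  assert (Hy_ub : forall n, y n <= M).
  { intros n. pose proof (l2_coord_ub x n Hx). pose proof (Hd n). pose proof (Rle_abs (y n - x n)).
    unfold M. lra. }
  eapply Rle_lt_trans; [apply (f_ex_lipschitz y x M d Hy_ub Hx_ub Hd)|].
  rewrite Rmax_left by lra. exact Hdeps.
Qed.

Lemma f_ex_convex : l2_convex f_ex.
Proof.
  intros x y t Hx Hy Ht.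
  set (M := l2norm x + l2norm y).
  assert (Hx_ub : forall n, x n <= M).
  { intros n. pose proof (l2_coord_ub x n Hx). pose proof (Rabs_pos (y 0%nat)).
    pose proof (l2_coord_le y 0 Hy). unfold M. lra. }
  assert (Hy_ub : forall n, y n <= M).
  { intros n. pose proof (l2_coord_ub y n Hy). pose proof (Rabs_pos (x 0%nat)).
    pose proof (l2_coord_le x 0 Hx). unfold M. lra. }
  assert (Hz_ub : forall n, sadd (sscal t x) (sscal (1 - t) y) n <= M).
  { intros n. unfold sadd, sscal. pose proof (Hx_ub n). pose proof (Hy_ub n). nra. }
  destruct (exists_nat_ge M) as [N HN].
  rewrite (f_ex_trunc _ M Hz_ub N HN), (f_ex_trunc x M Hx_ub N HN), (f_ex_trunc y M Hy_ub N HN).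
  apply sum_le_lincomb. intros n. unfold f_term, sadd, sscal.
  replace (t * x n + (1 - t) * y n - INR (S n)) with
    (t * (x n - INR (S n)) + (1 - t) * (y n - INR (S n))) by ring.
  pose proof (theta_convex (x n - INR (S n)) (y n - INR (S n)) t Ht).
  pose proof (pow_le (/ 2) (S n)). nra.
Qed.

Lemma exists_coord_neq0 (v : rseq) : v <> (fun _ => 0) -> exists k, v k <> 0.
Proof.
  intros Hv. apply NNPP. intros Hall. apply Hv, functional_extensionality.
  intros k. apply NNPP. intros Hk. apply Hall. now exists k.
Qed.

Lemma f_ex_not_constant_on_lines (x v : rseq) : is_l2 x -> is_l2 v -> v <> (fun _ => 0) ->
  exists t1 t2, f_ex (sadd x (sscal t1 v)) <> f_ex (sadd x (sscal t2 v)).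
Proof.
  intros Hx Hv Hv0. destruct (exists_coord_neq0 v Hv0) as [k Hk].
  set (F := f_ex (sadd x (sscal 0 v))).
  (* choose t so that the k-th term alone equals (2^(k+1) (|F|+1))^2 / 2^(k+1) >= |F| + 1 *)
  set (s := 2 ^ S k * (Rabs F + 1)).
  assert (Hpow : 1 <= 2 ^ S k) by (apply pow_R1_Rle; lra).
  assert (Hs : 1 <= s) by (unfold s; pose proof (Rabs_pos F); nra).
  set (t := (s + INR (S k) - x k) / v k).
  exists 0, t. intros Heq. fold F in Heq.
  set (z := sadd x (sscal t v)) in Heq.
  assert (Hz : is_l2 z) by (apply (is_l2_lincomb 1 t x v); [intros; unfold z, sadd, sscal; ring|exact Hx|exact Hv]).
  pose proof (f_term_le_f_ex z (l2norm z) (fun n => l2_coord_ub z n Hz) k) as Hterm.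
  assert (Hzk : z k - INR (S k) = s) by (unfold z, sadd, sscal, t; field; exact Hk).
  unfold f_term in Hterm. rewrite Hzk, theta_Rmax, Rmax_left in Hterm by lra.
  assert (Hks : (/ 2) ^ S k * s ^ 2 = s * (Rabs F + 1)).
  { unfold s. rewrite <- Rinv_pow by lra. field. lra. }
  pose proof (Rle_abs F). pose proof (Rabs_pos F). nra.
Qed.

Definition unit_seq (n : nat) : rseq := fun m => if Nat.eq_dec m n then 1 else 0.

Lemma is_l2_unit_seq (n : nat) : is_l2 (unit_seq n).
Proof.
  exists (sum_f_R0 (fun m => unit_seq n m ^ 2) n). apply infinite_sum_finite.
  intros m Hm. unfold unit_seq. destruct (Nat.eq_dec m n); [lia|ring].
Qed.

Lemma f_ex_far_coord_invariant (x : rseq) (n : nat) (t : R) :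
  (forall m, Rabs (x m) <= INR n) -> -1 <= t <= 1 ->
  f_ex (sadd (sscal 1 x) (sscal t (unit_seq n))) = f_ex x.
Proof.
  intros Hx Ht. rewrite !f_ex_series. f_equal. apply functional_extensionality. intros m.
  unfold f_term, sadd, sscal, unit_seq. destruct (Nat.eq_dec m n) as [->|Hmn].
  - pose proof (Rle_abs (x n)). pose proof (Hx n). rewrite S_INR.
    rewrite !theta_eq0 by lra. reflexivity.
  - do 3 f_equal. ring.
Qed.

Lemma no_strict_min_tilt : ~ (exists xi x, l2_dual xi /\ is_l2 x /\
  forall y, is_l2 y -> y <> x -> f_ex y - xi y > f_ex x - xi x).
Proof.
  intros [xi [x [[Hlin _] [Hx Hmin]]]].
  destruct (exists_nat_ge (l2norm x)) as [n Hn].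
  assert (Hxn : forall m, Rabs (x m) <= INR n) by (intros m; pose proof (l2_coord_le x m Hx); lra).
  assert (Htilt : forall t, -1 <= t <= 1 -> t <> 0 -> - t * xi (unit_seq n) > 0).
  { intros t Ht Ht0.
    set (y := sadd (sscal 1 x) (sscal t (unit_seq n))).
    assert (Hy : is_l2 y)
      by (apply (is_l2_lincomb 1 t x (unit_seq n)); [reflexivity|exact Hx|apply is_l2_unit_seq]).
    assert (Hyx : y <> x).
    { intros Hyx. assert (Hyn : y n = x n) by now rewrite Hyx.
      unfold y, sadd, sscal, unit_seq in Hyn. destruct (Nat.eq_dec n n); [lra|congruence]. }
    pose proof (Hmin y Hy Hyx) as Hlt.
    unfold y in Hlt. rewrite f_ex_far_coord_invariant, Hlin in Hlt by (auto using is_l2_unit_seq).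
    lra. }
  pose proof (Htilt (1 / 2) ltac:(lra) ltac:(lra)).
  pose proof (Htilt (- 1 / 2) ltac:(lra) ltac:(lra)). lra.
Qed.

Theorem mainTheorem10 :
  l2_continuous f_ex /\
  l2_convex f_ex /\
  (forall x v, is_l2 x -> is_l2 v -> v <> (fun _ => 0) ->
     exists t1 t2, f_ex (sadd x (sscal t1 v)) <> f_ex (sadd x (sscal t2 v))) /\
  ~ (exists xi x, l2_dual xi /\ is_l2 x /\
       forall y, is_l2 y -> y <> x -> f_ex y - xi y > f_ex x - xi x).
Proof.
  split; [exact f_ex_continuous|].
  split; [exact f_ex_convex|].
  split; [exact f_ex_not_constant_on_lines|].
  exact no_strict_min_tilt.
Qed.
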